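(* Let $K$ be an algebraically closed field of characteristic zero, $c\ge 4$, and $\mathfrak{g}=M_{2,c}$. Then $$\chi(\mathfrak{g})=\dim\mathfrak{g}-4=2\alpha(\mathfrak{g})-\dim\mathfrak{g}=\frac{c^2-c-4}{2}.$$
   Context: Lower central series: $\mathfrak{h}^1=\mathfrak{h}$, $\mathfrak{h}^{k+1}=[\mathfrak{h},\mathfrak{h}^k]$. $F_g$ is the free Lie algebra over $K$ on $g$ generators, $F_{g,c}=F_g/F_g^{c+1}$, and $M_{g,c}:=F_{g,c}/[F_{g,c}^2,F_{g,c}^2]$. $\alpha(\mathfrak{h})$ is the maximal dimension of an abelian subalgebra; for $\ell\in\mathfrak{h}^*$, $\mathfrak{h}(\ell)=\{y\in\mathfrak{h}\mid\ell([x,y])=0\ \forall x\in\mathfrak{h}\}$ and the index is $\chi(\mathfrak{h})=\min_{\ell\in\mathfrak{h}^*}\dim\mathfrak{h}(\ell)$. (One has $\dim M_{2,c}=(c^2-c+4)/2$.) *)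

From mathcomp Require Import all_boot all_algebra.
Set Implicit Arguments. Unset Strict Implicit. Unset Printing Implicit Defensive.
Import GRing.Theory.
Local Open Scope ring_scope.

Section LieNotions.
Variables (K : fieldType) (V : vectType K) (br : V -> V -> V).

(* An abelian subalgebra: a subspace on which all brackets vanish
   (such a subspace is automatically a subalgebra). *)
Definition abelian_subspace (U : {vspace V}) : Prop :=
  forall u v, u \in U -> v \in U -> br u v = 0.

Definition alpha_is (m : nat) : Prop :=
  (exists U : {vspace V}, abelian_subspace U /\ \dim U = m) /\
  (forall U : {vspace V}, abelian_subspace U -> (\dim U <= m)%N).

Definition stab_dim (l : V -> K) (n : nat) : Prop :=
  exists U : {vspace V},
    (forall y, y \in U <-> (forall x, l (br x y) = 0)) /\ \dim U = n.

Definition index_is (n : nat) : Prop :=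
  (exists l : {linear V -> K^o}, stab_dim l n) /\
  (forall (l : {linear V -> K^o}) (m : nat), stab_dim l m -> (n <= m)%N).

End LieNotions.

(* The free metabelian nilpotent Lie algebra M_{2,c} of rank 2, class c.   *)
(* Standard model: basis x = inl 0, y = inl 1, and e_(a,b) (a + b <= c-2), *)
(* where e_(a,b) = (ad x)^a (ad y)^b [x,y]; so                            *)
(*   [x,y] = e_(0,0), [x,e_(a,b)] = e_(a+1,b), [y,e_(a,b)] = e_(a,b+1)    *)
(* (zero when the degree a+b+3 exceeds c), [e,e'] = 0.                     *)
Definition M2idx (c : nat) : finType :=
  ('I_2 + {p : 'I_c * 'I_c | (p.1 + p.2 <= c - 2)%N})%type.

Section M2c.
Variables (K : fieldType) (c : nat).

Definition M2coef (i j k : M2idx c) : K :=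
  match k with
  | inl _ => 0
  | inr p =>
    let a := ((val p).1 : nat) in let b := ((val p).2 : nat) in
    match i, j with
    | inl s, inl t =>
        if (a == 0%N) && (b == 0%N) then
          (((s : nat) == 0%N) && ((t : nat) == 1%N))%:R
          - (((s : nat) == 1%N) && ((t : nat) == 0%N))%:R
        else 0
    | inl s, inr q =>
        let a' := ((val q).1 : nat) in let b' := ((val q).2 : nat) in
        if (s : nat) == 0%N then ((a == a'.+1) && (b == b'))%:R
        else ((a == a') && (b == b'.+1))%:R
    | inr q, inl t =>
        let a' := ((val q).1 : nat) in let b' := ((val q).2 : nat) in
        if (t : nat) == 0%N then - ((a == a'.+1) && (b == b'))%:R
        else - ((a == a') && (b == b'.+1))%:R
    | inr _, inr _ => 0
    end
  end.

Definition M2 : vectType K := {ffun M2idx c -> K^o}.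

Definition M2br (u v : M2) : M2 :=
  \sum_(i : M2idx c) \sum_(j : M2idx c)
     (u i * v j) *: ([ffun k => M2coef i j k] : M2).

End M2c.

From HB Require Import structures.
From mathcomp Require Import all_boot all_algebra sesquilinear ring zify.
Set Implicit Arguments. Unset Strict Implicit. Unset Printing Implicit Defensive.
Import GRing.Theory.
Local Open Scope ring_scope.

(* Let N = dim M_{2,c} = 2 + c(c-1)/2 and let D be the span of the e_(a,b), the
   derived algebra.  D is abelian of dimension N - 2, and no abelian subalgebra is
   larger: one containing some u outside D lies in the kernel of ad u, whose image
   contains [u, w], with nonzero [x,y]-coordinate for w = x or w = y, and the
   nonzero [u, [x,y]] in the span of [x,[x,y]] and [y,[x,y]]; so alpha = N - 2.
   For any l and any abelian subalgebra A, the vectors of A killed by l o ad v for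
   v in a basis of a complement of A lie in g(l), so dim g(l) >= 2 dim A - N and
   chi >= 2 alpha - N = N - 4.  The functional l = e_(2,0)^* + e_(0,2)^* attains
   this: g(l) is spanned by the e_(a,b) other than e_(1,0) and e_(0,1). *)

Section FfunCoordinates.
Variables (K : fieldType) (I : finType).
Local Notation V := {ffun I -> K^o}.

Definition delta (i : I) : V := [ffun k => (k == i)%:R].

Lemma deltaE i k : delta i k = (k == i)%:R.
Proof. exact: ffunE. Qed.

Lemma dim_ffun : \dim {:V} = #|I|.
Proof. by rewrite dimvf /dim /= muln1. Qed.

Lemma ffun_delta_sum (v : V) : v = \sum_k v k *: delta k.
Proof.
apply/ffunP => k; rewrite sum_ffunE (bigD1 k) //= big1 => [|j /negPf jk].
  by rewrite !ffunE eqxx addr0 [_ *: _]mulr1.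
by rewrite !ffunE eq_sym jk scaler0.
Qed.

Lemma span_deltas_vanish (s : seq I) (v : V) k :
  v \in <<[seq delta i | i <- s]>>%VS -> k \notin s -> v k = 0.
Proof.
move=> /(coord_span (X := in_tuple _)) -> ks; rewrite sum_ffunE big1 // => j _.
rewrite /= (nth_map k) -?(size_map delta) // ffunE deltaE.
suff /negPf -> : k != nth k s j by rewrite scaler0.
by apply: contraNneq ks => ->; rewrite mem_nth // -(size_map delta).
Qed.

Lemma free_deltas (s : seq I) : uniq s -> free [seq delta i | i <- s].
Proof.
elim: s => [|i s IHs] /=; first by rewrite nil_free.
case/andP=> si us; rewrite free_cons IHs // andbT.
by apply/negP => /span_deltas_vanish/(_ si)/eqP; rewrite deltaE eqxx oner_eq0.
Qed.

Definition zero_on (s : seq I) : {vspace V} :=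
  <<[seq delta i | i <- enum [predC s]]>>%VS.

Lemma mem_zero_on (s : seq I) (v : V) : (v \in zero_on s) = all (fun k => v k == 0) s.
Proof.
apply/idP/allP => [vs k ks | v0].
  by rewrite (span_deltas_vanish vs) // mem_enum inE ks.
rewrite [v]ffun_delta_sum (bigID [in s]) /= big1 ?add0r => [|k ks]; last first.
  by rewrite (eqP (v0 k ks)) scale0r.
apply: memv_suml => k ks; apply/memvZ/memv_span/map_f; by rewrite mem_enum.
Qed.

Lemma dim_zero_on (s : seq I) : uniq s -> \dim (zero_on s) = (#|I| - size s)%N.
Proof.
move=> us; rewrite /zero_on (eqP (free_deltas (enum_uniq _))) size_map -cardE.
by rewrite -(card_uniqP us) -(cardC [in s]) addKn.
Qed.

End FfunCoordinates.
Arguments delta {K I}.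
Arguments zero_on {K I}.

Section AbelianBounds.
Variables (K : fieldType) (V : vectType K) (br : {bilinear V -> V -> V}).
Variable l : {linear V -> K^o}.

Definition pairing_row n (X : n.-tuple V) (y : V) : 'rV[K]_n :=
  \row_i l (br (tnth X i) y).

Lemma pairing_row_is_linear n (X : n.-tuple V) : linear (pairing_row X).
Proof. by move=> a y z; apply/rowP => i; rewrite !mxE linearPr linearP. Qed.

HB.instance Definition _ n (X : n.-tuple V) :=
  GRing.isLinear.Build K V 'rV[K]_n *:%R (pairing_row X) (pairing_row_is_linear X).

Lemma abelian_stab_dim_ge (U S : {vspace V}) :
  abelian_subspace br U -> (forall y, y \in S <-> forall x, l (br x y) = 0) ->
  (2 * \dim U <= \dim S + \dim {:V})%N.
Proof.
move=> abU defS; set X := vbasis U^C; pose f := linfun (pairing_row X).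
have dim_ker : (\dim U <= \dim (U :&: lker f) + (\dim {:V} - \dim U))%N.
  rewrite -dimv_compl -{1}(limg_ker_dim f U) leq_add2l.
  by have := dimvS (subvf (f @: U)); rewrite dimvf dim_matrix mul1r.
have ker_sub : (U :&: lker f <= S)%VS.
  apply/subvP => y /memv_capP[yU]; rewrite memv_ker lfunE => /eqP fy0.
  apply/defS => x; have /memv_addP[u uU [v vC ->]] : x \in (U + U^C)%VS.
    by rewrite addv_complf memvf.
  rewrite linearDl linearD /= abU // linear0 add0r (coord_vbasis vC).
  rewrite linear_sumlz linear_sum.
  apply: big1 => i _; rewrite linearZl_LR linearZ /=.
  have := congr1 (fun r : 'rV_ _ => r 0 i) fy0; rewrite !mxE (tnth_nth 0) => ->.
  by rewrite scaler0.
have := dimvS ker_sub; have := dimvS (subvf U); lia.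
Qed.

Definition ad (u : V) : 'Hom(V, V) := linfun (br u).

Lemma adE u v : ad u v = br u v.
Proof. exact: lfunE. Qed.

Lemma abelian_dim_add_rank (U : {vspace V}) u k :
  abelian_subspace br U -> u \in U -> (k <= \dim (limg (ad u)))%N ->
  (\dim U + k <= \dim {:V})%N.
Proof.
move=> abU uU rk; rewrite -(limg_ker_dim (ad u) fullv) capfv leq_add // dimvS //.
by apply/subvP => v vU; rewrite memv_ker adE abU.
Qed.

End AbelianBounds.

Lemma sum_pair_indicator (R : pzRingType) (I : finType) (F : I -> I -> R) i1 j1 :
  \sum_i \sum_j F i j * ((i == i1) && (j == j1))%:R = F i1 j1.
Proof.
rewrite (bigD1 i1) //= (bigD1 j1) //= !eqxx mulr1 !big1 ?addr0 // => [i|j] /negPf->.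
  by rewrite big1 // => j _; rewrite mulr0.
by rewrite mulr0.
Qed.

Section M2Bracket.
Variables (K : fieldType) (c : nat).
Local Notation V := (M2 K c).

Lemma M2brE (u v : V) k :
  M2br u v k = \sum_i \sum_j u i * v j * M2coef K i j k.
Proof.
rewrite sum_ffunE; apply: eq_bigr => i _; rewrite sum_ffunE.
by apply: eq_bigr => j _; rewrite !ffunE.
Qed.

Lemma M2br_bilinear : bilinear_for *:%R *:%R (@M2br K c).
Proof.
split=> [v a u w | u a v w]; apply/ffunP => k; rewrite !ffunE !M2brE;
  rewrite scaler_sumr -big_split; apply: eq_bigr => i _;
  rewrite scaler_sumr -big_split; apply: eq_bigr => j _;
  by rewrite !ffunE /GRing.scale /=; ring.
Qed.

HB.instance Definition _ :=
  bilinear_isBilinear.Build K V V V *:%R *:%R (@M2br K c) M2br_bilinear.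

End M2Bracket.

Section M2LowDegree.
Variables (K : fieldType) (n : nat).
Local Notation c := n.+4.
Local Notation I := (M2idx c).
Local Notation V := (M2 K c).

Definition ix : I := inl (Ordinal (isT : (0 < 2)%N)).
Definition iy : I := inl (Ordinal (isT : (1 < 2)%N)).
Definition ie a b (ha : (a < c)%N) (hb : (b < c)%N) (hab : (a + b <= c - 2)%N) : I :=
  inr (exist _ (Ordinal ha, Ordinal hb) hab).
Definition e00 : I := @ie 0 0 isT isT isT.
Definition e10 : I := @ie 1 0 isT isT isT.
Definition e01 : I := @ie 0 1 isT isT isT.
Definition e20 : I := @ie 2 0 isT isT isT.
Definition e02 : I := @ie 0 2 isT isT isT.

Lemma eq_ie a b ha hb hab a' b' ha' hb' hab' :
  (@ie a b ha hb hab == @ie a' b' ha' hb' hab') = (a' == a) && (b' == b).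
Proof.
apply/eqP/andP => [[-> ->] | [/eqP eqa /eqP eqb]]; first by rewrite !eqxx.
by subst; congr inr; apply: val_inj; congr pair; apply: val_inj.
Qed.

Lemma M2br_antisym_coord (u v : V) k i1 j1 :
  (forall i j, M2coef K i j k = ((i == i1) && (j == j1))%:R - ((i == j1) && (j == i1))%:R) ->
  M2br u v k = u i1 * v j1 - u j1 * v i1.
Proof.
move=> coefE; rewrite M2brE.
under eq_bigr => i _ do under eq_bigr => j _ do rewrite coefE mulrBr.
under eq_bigr => i _ do rewrite sumrB.
by rewrite sumrB !sum_pair_indicator.
Qed.

Ltac M2coef_cases :=
  apply: M2br_antisym_coord => -[[[|[|s]] hs] | [[[a ha] [b hb]] hab]]
    [[[|[|t]] ht] | [[[a' ha'] [b' hb']] hab']] //=;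
  rewrite ?eq_ie -?[(0 == _.+1)%N]/false -?[(_.+1 == 0)%N]/false ?eqSS;
  rewrite ?andbF ?andbT ?subr0 ?sub0r ?oppr0 ?mulr0n ?mulr1n //.

Lemma M2br_e00 (u v : V) : M2br u v e00 = u ix * v iy - u iy * v ix.
Proof. M2coef_cases. Qed.

Lemma M2br_e10 (u v : V) : M2br u v e10 = u ix * v e00 - u e00 * v ix.
Proof. M2coef_cases. Qed.

Lemma M2br_e01 (u v : V) : M2br u v e01 = u iy * v e00 - u e00 * v iy.
Proof. M2coef_cases. Qed.

Lemma M2br_e20 (u v : V) : M2br u v e20 = u ix * v e10 - u e10 * v ix.
Proof. M2coef_cases. Qed.

Lemma M2br_e02 (u v : V) : M2br u v e02 = u iy * v e01 - u e01 * v iy.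
Proof. M2coef_cases. Qed.

Definition M2der : {vspace V} := zero_on [:: ix; iy].

Lemma mem_M2der v : (v \in M2der) = (v ix == 0) && (v iy == 0).
Proof. by rewrite mem_zero_on /= andbT. Qed.

Lemma dim_M2der : \dim M2der = (#|I| - 2)%N.
Proof. by rewrite dim_zero_on. Qed.

Lemma M2der_inl v s : v \in M2der -> v (inl s) = 0.
Proof.
rewrite mem_M2der => /andP[/eqP vx /eqP vy].
by case: s => -[|[|//]] hs; [rewrite -vx | rewrite -vy]; congr (v (inl _)); apply: val_inj.
Qed.

Lemma M2der_abelian : abelian_subspace (@M2br K c) M2der.
Proof.
move=> u v uD vD; apply/ffunP => k; rewrite M2brE ffunE big1 // => -[s|p] _.
  by rewrite big1 // => j _; rewrite M2der_inl // !mul0r.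
rewrite big1 // => -[t|q] _; first by rewrite (M2der_inl t vD) mulr0 mul0r.
by case: k => *; rewrite mulr0.
Qed.

Lemma M2_rank_ad u w :
  M2br u w e00 != 0 -> (2 <= \dim (limg (ad (@M2br K c) u)))%N.
Proof.
move=> uw; set a := M2br u w; set b := M2br u (delta e00).
have b_e00 : b e00 = 0 by rewrite M2br_e00 !deltaE /= !mulr0 subr0.
have b_neq0 : b != 0.
  apply: contraNneq uw => b0.
  have : b e10 = 0 /\ b e01 = 0 by rewrite b0 !ffunE.
  rewrite M2br_e10 M2br_e01 !deltaE /= !mulr1 !mulr0 !subr0 => -[ux uy].
  by rewrite M2br_e00 ux uy !mul0r subrr.
have free_ab : free [:: a; b].
  rewrite free_cons seq1_free b_neq0 andbT span_seq1.
  by apply: contra uw => /vlineP[k ak]; rewrite -/a ak ffunE b_e00 [_ *: _]mulr0.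
rewrite -[2%N]/(size [:: a; b]) -(eqP free_ab) dimvS //; apply/span_subvP => z.
by rewrite !inE /a /b => /orP[] /eqP ->; rewrite -adE memv_img ?memvf.
Qed.

Lemma M2_alpha : alpha_is (@M2br K c) (#|I| - 2).
Proof.
split; first by exists M2der; split; [exact: M2der_abelian | exact: dim_M2der].
move=> U abU; have [/dimvS|/subvPn[u uU]] := boolP (U <= M2der)%VS.
  by rewrite dim_M2der.
rewrite mem_M2der negb_and => uxy.
have [w uw] : exists w, M2br u w e00 != 0.
  have [ux0|ux] := eqVneq (u ix) 0.
    exists (delta ix); rewrite M2br_e00 !deltaE /= ux0 mul0r sub0r mulr1 oppr_eq0.
    by rewrite ux0 eqxx in uxy.
  by exists (delta iy); rewrite M2br_e00 !deltaE /= mulr1 mulr0 subr0.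
by have := abelian_dim_add_rank abU uU (M2_rank_ad uw); rewrite dim_ffun; lia.
Qed.

Definition M2form (v : V) : K^o := v e20 + v e02.

Lemma M2form_is_linear : linear M2form.
Proof. by move=> a u v; rewrite /M2form !ffunE /GRing.scale /=; ring. Qed.

HB.instance Definition _ :=
  GRing.isLinear.Build K V K^o *:%R M2form M2form_is_linear.

Ltac simpl_consts := rewrite !(mul0r, mul1r, subr0, sub0r, oppr0, addr0, add0r).

Lemma M2_stab_form : stab_dim (@M2br K c) M2form (#|I| - 4).
Proof.
exists (zero_on [:: ix; iy; e10; e01]); split; last by rewrite dim_zero_on.
move=> y; rewrite mem_zero_on /= andbT; split.
  case/and4P=> /eqP yx /eqP yy /eqP y10 /eqP y01 x.
  by rewrite /M2form M2br_e20 M2br_e02 yx yy y10 y01 !mulr0 !subr0 addr0.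
move=> y0; have form0 (x : V) :
    x ix * y e10 - x e10 * y ix + (x iy * y e01 - x e01 * y iy) = 0.
  by rewrite -M2br_e20 -M2br_e02 -[LHS]/(M2form _) y0.
have := form0 (delta ix); rewrite !deltaE /=; simpl_consts => ->.
have := form0 (delta iy); rewrite !deltaE /=; simpl_consts => ->.
have := form0 (delta e10); rewrite !deltaE /=; simpl_consts => /eqP.
rewrite oppr_eq0 => /eqP ->.
have := form0 (delta e01); rewrite !deltaE /=; simpl_consts => /eqP.
by rewrite oppr_eq0 => /eqP ->; rewrite !eqxx.
Qed.

Lemma M2_index : index_is (@M2br K c) (#|I| - 4).
Proof.
split; first by exists (M2form : {linear _ -> _}); exact: M2_stab_form.
move=> l m [S [defS <-]].
by have := abelian_stab_dim_ge M2der_abelian defS; rewrite dim_M2der dim_ffun; lia.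
Qed.

End M2LowDegree.

Lemma sum_ord_lt k c : (\sum_(b < c) (b < k : nat))%N = minn k c.
Proof. by elim: c => [|c IHc]; rewrite ?big_ord0 ?minn0 // big_ord_recr IHc /=; lia. Qed.

Lemma card_M2idx c : (1 < c)%N -> #|M2idx c| = ('C(c, 2) + 2)%N.
Proof.
move=> c_gt1; rewrite card_sum card_ord card_sig addnC; congr (_ + 2)%N.
rewrite -sum1_card big_mkcond.
rewrite -(pair_big xpredT xpredT (fun a b : 'I_c => (a + b <= c - 2 : nat))) /=.
rewrite -bin2_sum big_mkord (reindex_inj rev_ord_inj) /=; apply: eq_bigr => a _.
rewrite (eq_bigr (fun b : 'I_c => (b < a : nat))) => [|b _]; last first.
  by congr nat_of_bool; apply/idP/idP; have := ltn_ord a; have := ltn_ord b; lia.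
by rewrite sum_ord_lt; apply/minn_idPl/ltnW.
Qed.

Theorem theorem5p4 (K : closedFieldType) (c : nat) :
  [pchar K] =i pred0 -> (4 <= c)%N ->
  exists chi alpha : nat,
    index_is (M2br (K := K) (c := c)) chi /\
    alpha_is (M2br (K := K) (c := c)) alpha /\
    chi%:Z = (\dim (fullv : {vspace M2 K c}))%:Z - 4 /\
    chi%:Z = 2 * alpha%:Z - (\dim (fullv : {vspace M2 K c}))%:Z /\
    2 * chi%:Z = (c ^ 2)%:Z - c%:Z - 4.
Proof.
move=> _ c_ge4; have [n ->] : exists n, c = n.+4 by exists (c - 4)%N; lia.
exists (#|M2idx n.+4| - 4)%N, (#|M2idx n.+4| - 2)%N.
split; first exact: M2_index.
split; first exact: M2_alpha.
have twice_bin2 : (2 * 'C(n.+4, 2) = n.+4 * n.+3)%N by rewrite -mul_bin_diag bin1.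
rewrite dim_ffun card_M2idx //; lia.
Qed.
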